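(* Let $\gamma,h>0$, $z,\tilde z\in\mathbb{R}^{2d}$, $n\ge1$, and let $E_k$, $k\in\{1,\dots,n\}$, be as defined below. Then \[ \sum_{k=1}^n|E_k|^2=\bigl|\Sigma_{h,n}^{-1/2}A_h^n\Delta z\bigr|^2\le\left(\frac{44}{\gamma(hn)^3}+\frac{264+44\gamma^2}{\gamma hn}\right)|\Delta z|^2. \]
   Context: Let $A_h=\begin{pmatrix} I_d & he^{-\gamma h/2}I_d\\ 0 & e^{-\gamma h}I_d\end{pmatrix}$, $L_h=(1-e^{-\gamma h})^{1/2}\begin{pmatrix} hI_d & 0\\ e^{-\gamma h/2}I_d & I_d\end{pmatrix}$ (block matrices in $\mathbb{R}^{2d\times2d}$), $\Sigma_{h,n}=\sum_{k=1}^n A_h^{n-k}L_hL_h^T(A_h^T)^{n-k}$ (positive definite), $\Delta z=\tilde z-z$, and $E_k=L_h^T(A_h^T)^{n-k}\Sigma_{h,n}^{-1}A_h^n\Delta z$ for $k=1,\dots,n$. $|\cdot|$ is the Euclidean norm. *)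

From HB Require Import structures.
From mathcomp Require Import all_boot all_order all_algebra.
From mathcomp Require Import all_classical all_reals.
From mathcomp Require Import all_analysis.
From mathcomp Require Import sequences exp.
Set Implicit Arguments. Unset Strict Implicit. Unset Printing Implicit Defensive.
Import Order.TTheory GRing.Theory Num.Theory.
Local Open Scope ring_scope.

Section Defs.
Variable R : realType.

Definition Amx (d : nat) (gamma h : R) : 'M[R]_(d + d) :=
  block_mx 1%:M ((h * expR (- (gamma * h) / 2))%:M)
           0 ((expR (- (gamma * h)))%:M).

Definition Lmx (d : nat) (gamma h : R) : 'M[R]_(d + d) :=
  Num.sqrt (1 - expR (- (gamma * h))) *:
  block_mx (h%:M) 0 ((expR (- (gamma * h) / 2))%:M) 1%:M.

Definition Sigmamx (d : nat) (gamma h : R) (n : nat) : 'M[R]_(d + d) :=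
  \sum_(1 <= k < n.+1)
    (Amx d gamma h ^+ (n - k)) *m Lmx d gamma h *m (Lmx d gamma h)^T
      *m ((Amx d gamma h)^T ^+ (n - k)).

Definition Evec (d : nat) (gamma h : R) (n k : nat) (dz : 'cV[R]_(d + d))
  : 'cV[R]_(d + d) :=
  (Lmx d gamma h)^T *m ((Amx d gamma h)^T ^+ (n - k))
    *m invmx (Sigmamx d gamma h n) *m (Amx d gamma h ^+ n) *m dz.

Definition sqnorm (m : nat) (v : 'cV[R]_m) : R := \sum_i (v i 0) ^+ 2.

Definition spd (m : nat) (S : 'M[R]_m) : Prop :=
  S^T = S /\ forall v : 'cV[R]_m, v != 0 -> 0 < (v^T *m S *m v) 0 0.
End Defs.
Arguments Amx {R}. Arguments Lmx {R}. Arguments Sigmamx {R}.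
Arguments Evec {R}. Arguments sqnorm {R m}. Arguments spd {R m}.

(* Put w := Sigma^-1 A^n dz.  Then sum_k |E_k|^2 = w^T Sigma w = <(A^T)^n w, dz>, so by
   AM-GM the bound (and the invertibility of Sigma) follows from the observability
   inequality |(A^T)^n w|^2 <= C w^T Sigma w = C sum_k |L^T (A^T)^(n-k) w|^2.
   Coordinatewise, (A^T)^j maps (a, b) to (a, u_j) with u_0 = b and the affine recursion
   u_(j+1) = c + e u_j, where e = exp(-gamma h) and c = h exp(-gamma h/2) a, while the
   right-hand side dominates (1 - e) (u_0^2 + sum_(1<=i<=n) u_i^2 / e).  The identity
   (1 - e) u_(k+m) = (1 - e) e^m u_k + c (1 - e^m), summed over the first half of
   {0..n} with m ~ n/2, bounds the drift c (1 - e^m), hence a, because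
   1 - e^m >= m gamma h / (1 + m gamma h); averaged over m < n it bounds u_n. *)

From mathcomp Require Import all_boot all_order all_algebra.
From mathcomp Require Import all_classical all_reals all_analysis.
From mathcomp Require Import ring lra zify.
Import Order.TTheory GRing.Theory Num.Theory.
Local Open Scope ring_scope.

Section SumInequalities.
Context {R : realFieldType}.

Lemma sqr_sum_le (N : nat) (z : nat -> R) :
  (\sum_(0 <= k < N) z k) ^+ 2 <= N%:R * \sum_(0 <= k < N) z k ^+ 2.
Proof.
elim: N => [|N IH]; first by rewrite big_geq // expr0n mul0r.
rewrite !big_nat_recr //=; move: IH.
set S := \sum_(0 <= k < N) z k; set Q := \sum_(0 <= k < N) z k ^+ 2 => IH.
have cross : 2 * (S * z N) <= Q + N%:R * z N ^+ 2.
  have -> : Q + N%:R * z N ^+ 2 = \sum_(0 <= k < N) (z k ^+ 2 + z N ^+ 2).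
    by rewrite big_split sumr_const_nat subn0 mulr_natl.
  rewrite mulr_suml mulr_sumr.
  by apply: ler_sum => k _; have := sqr_ge0 (z k - z N); lra.
rewrite -natr1; nra.
Qed.

Lemma ler_sum_nat_widen (F : nat -> R) (a b c d : nat) :
  (forall i, 0 <= F i) -> (a <= b)%N -> (b <= c)%N -> (c <= d)%N ->
  \sum_(b <= i < c) F i <= \sum_(a <= i < d) F i.
Proof.
move=> F_ge0 ab bc cd.
rewrite (big_cat_nat ab (leq_trans bc cd)) (big_cat_nat bc cd) /=.
have : 0 <= \sum_(a <= i < b) F i by apply: sumr_ge0.
have : 0 <= \sum_(c <= i < d) F i by apply: sumr_ge0.
lra.
Qed.

End SumInequalities.

Section AffineRecursion.
Context {R : realFieldType} {c e : R} {u : nat -> R}.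
Hypothesis uS : forall j, u j.+1 = c + e * u j.

Lemma affine_shift k m :
  (1 - e) * u (k + m)%N = (1 - e) * e ^+ m * u k + c * (1 - e ^+ m).
Proof.
elim: m => [|m IH]; first by rewrite addn0 expr0; ring.
rewrite addnS uS exprS.
transitivity ((1 - e) * c + e * ((1 - e) * u (k + m)%N)); first ring.
by rewrite IH; ring.
Qed.

Lemma affine_average n :
  n%:R * ((1 - e) * u n) = (1 - e) * \sum_(0 <= j < n) e ^+ j * u (n - j)%N
                           + c * \sum_(0 <= j < n) (1 - e ^+ j).
Proof.
have -> : n%:R * ((1 - e) * u n) = \sum_(0 <= j < n) (1 - e) * u n.
  by rewrite sumr_const_nat subn0 mulr_natl.
rewrite !mulr_sumr -big_split /=; apply: eq_big_nat => j /andP[_ jn].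
by rewrite -{1}(subnK (ltnW jn)) affine_shift; ring.
Qed.

Definition orbit_energy n := e * u 0%N ^+ 2 + \sum_(1 <= i < n.+1) u i ^+ 2.

Hypotheses (e_gt0 : 0 < e) (e_lt1 : e < 1).
Context {n : nat}.

Lemma orbit_energy_ge_tail m : (0 < m)%N -> (m <= n.+1)%N ->
  \sum_(m <= i < n.+1) u i ^+ 2 <= orbit_energy n.
Proof.
move=> m_gt0 mn; rewrite /orbit_energy.
have e_u0 : 0 <= e * u 0%N ^+ 2 by rewrite mulr_ge0 ?sqr_ge0 // ltW.
apply: le_trans (ler_wpDl e_u0 (lexx _)).
by apply: ler_sum_nat_widen => // i; exact: sqr_ge0.
Qed.

Lemma orbit_energy_ge_full : e * \sum_(0 <= i < n.+1) u i ^+ 2 <= orbit_energy n.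
Proof.
rewrite /orbit_energy big_ltn // mulrDr lerD2l; apply: ler_piMl; last exact: ltW.
by apply: sumr_ge0 => i _; exact: sqr_ge0.
Qed.

Lemma drift_bound N m : (0 < N)%N -> (0 < m)%N -> (N + m = n.+1)%N ->
  N%:R * (c * (1 - e ^+ m)) ^+ 2 <= 4 * (1 - e) ^+ 2 * orbit_energy n.
Proof.
move=> N_gt0 m_gt0 Nm; set q := 1 - e ^+ m; set V := orbit_energy n.
have drift_sum : N%:R * (c * q) = (1 - e) * \sum_(0 <= k < N) (u (k + m)%N - e ^+ m * u k).
  rewrite mulr_sumr (eq_bigr (fun _ => c * q)) => [|k _]; last by rewrite mulrBr affine_shift /q; ring.
  by rewrite sumr_const_nat subn0 mulr_natl.
have tail : \sum_(0 <= k < N) u (k + m)%N ^+ 2 <= V.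
  have -> : \sum_(0 <= k < N) u (k + m)%N ^+ 2 = \sum_(m <= i < n.+1) u i ^+ 2.
    by rewrite -Nm -{2}[m]add0n big_addn addnK.
  by apply: orbit_energy_ge_tail; rewrite // -Nm leq_addl.
have head : e ^+ m ^+ 2 * \sum_(0 <= k < N) u k ^+ 2 <= V.
  apply: le_trans orbit_energy_ge_full; apply: ler_pM.
  - by rewrite exprn_ge0 // exprn_ge0 // ltW.
  - by apply: sumr_ge0 => k _; exact: sqr_ge0.
  - rewrite -exprM -{2}(expr1 e).
    by apply: ler_wiXn2l; [exact: ltW | exact: ltW | rewrite muln_gt0 m_gt0].
  - by apply: ler_sum_nat_widen => //; [exact: (fun i => sqr_ge0 _) | rewrite -Nm leq_addr].
have split_sq : \sum_(0 <= k < N) (u (k + m)%N - e ^+ m * u k) ^+ 2 <= 4 * V.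
  apply: le_trans (_ : \sum_(0 <= k < N) (2 * u (k + m)%N ^+ 2 + 2 * (e ^+ m ^+ 2 * u k ^+ 2)) <= _).
    apply: ler_sum => k _; have := sqr_ge0 (u (k + m)%N + e ^+ m * u k).
    rewrite sqrrB sqrrD exprMn; lra.
  by rewrite big_split /= -!mulr_sumr; lra.
have squared : (N%:R * (c * q)) ^+ 2 <= N%:R * (4 * (1 - e) ^+ 2 * V).
  rewrite drift_sum exprMn.
  have -> : N%:R * (4 * (1 - e) ^+ 2 * V) = (1 - e) ^+ 2 * (N%:R * (4 * V)) by ring.
  apply: ler_wpM2l; first exact: sqr_ge0.
  by apply: le_trans (sqr_sum_le _ _) _; apply: ler_wpM2l; rewrite ?ler0n.
have N_pos : 0 < N%:R :> R by rewrite ltr0n.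
rewrite -(ler_pM2l N_pos).
by have -> : N%:R * (N%:R * (c * q) ^+ 2) = (N%:R * (c * q)) ^+ 2 by ring.
Qed.

Lemma orbit_energy_ge_rev :
  \sum_(0 <= j < n) u (n - j)%N ^+ 2 <= orbit_energy n.
Proof.
have -> : \sum_(0 <= j < n) u (n - j)%N ^+ 2 = \sum_(1 <= i < n.+1) u i ^+ 2.
  rewrite big_add1 /= big_nat_rev /=; apply: eq_big_nat => j /andP[_ jn].
  by rewrite add0n subKn.
by apply: orbit_energy_ge_tail.
Qed.

Lemma last_sqr_bound : (0 < n)%N -> n%:R * u n ^+ 2 <= 66 * orbit_energy n.
Proof.
move=> n_gt0; set V := orbit_energy n.
set m := (n - n %/ 2)%N; set N := (n %/ 2).+1; set q := 1 - e ^+ m.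
have [m_gt0 Nm] : (0 < m)%N /\ (N + m = n.+1)%N by lia.
have e_ge0 := ltW e_gt0; have e_le1 := ltW e_lt1.
have n_pos : 0 < n%:R :> R by rewrite ltr0n.
set P := \sum_(0 <= j < n) e ^+ j * u (n - j)%N.
set Qs := \sum_(0 <= j < n) (1 - e ^+ j).
have P_bound : P ^+ 2 <= n%:R * V.
  apply: le_trans (sqr_sum_le _ _) _; apply: ler_wpM2l; first exact: ler0n.
  apply: le_trans orbit_energy_ge_rev; apply: ler_sum => j _.
  by rewrite exprMn ler_piMl ?sqr_ge0 // -exprM exprn_ile1.
have Q_range : 0 <= Qs <= n%:R * (2 * q).
  rewrite sumr_ge0 => [|j _]; last by rewrite subr_ge0 exprn_ile1.
  apply: le_trans (_ : _ <= \sum_(0 <= j < n) 2 * q) _; last first.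
    by rewrite sumr_const_nat subn0 -[_ *+ n]mulr_natl lexx.
  apply: ler_sum_nat => j /andP[_ jn].
  have : e ^+ m ^+ 2 <= e ^+ j by rewrite -exprM ler_wiXn2l //; lia.
  have : e ^+ m <= 1 by rewrite exprn_ile1.
  rewrite /q; nra.
have cq_bound : n%:R * (c * q) ^+ 2 <= 8 * (1 - e) ^+ 2 * V.
  have nN : n%:R <= 2 * N%:R :> R by rewrite -natrM ler_nat; lia.
  have := drift_bound N m isT m_gt0 Nm; rewrite -/q -/V.
  have := ler_wpM2r (sqr_ge0 (c * q)) nN; lra.
have sq_bound : (n%:R * ((1 - e) * u n)) ^+ 2 <= n%:R * (66 * (1 - e) ^+ 2 * V).
  rewrite affine_average -/P -/Qs.
  have := sqr_ge0 ((1 - e) * P - c * Qs).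
  have := ler_wpM2l (sqr_ge0 (1 - e)) P_bound.
  move: Q_range => /andP[Q_ge0 Q_le].
  have := ler_wpM2l (sqr_ge0 c) (ler_pM Q_ge0 Q_ge0 Q_le Q_le).
  have := ler_wpM2l (ler0n R n) cq_bound.
  nra.
have s_pos : 0 < n%:R * (1 - e) ^+ 2 by rewrite mulr_gt0 // exprn_gt0 // subr_gt0.
rewrite -(ler_pM2l s_pos).
have -> : n%:R * (1 - e) ^+ 2 * (n%:R * u n ^+ 2) = (n%:R * ((1 - e) * u n)) ^+ 2 by ring.
by have -> : n%:R * (1 - e) ^+ 2 * (66 * V) = n%:R * (66 * (1 - e) ^+ 2 * V) by ring.
Qed.

End AffineRecursion.

Arguments orbit_energy {R} e u n.

Section ExpBounds.
Context {R : realType}.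

Lemma expR_gap (y : R) : 0 <= y -> y <= (1 - expR (- y)) * (1 + y).
Proof.
move=> y_ge0; have := expR_ge1Dx y; have E_gt0 := expR_gt0 y.
rewrite expRN; set E := expR y => E_ge.
have -> : (1 - E^-1) * (1 + y) = y + (E - 1 - y) / E by field; rewrite gt_eqF.
by rewrite lerDl; apply: divr_ge0; [lra | exact: ltW].
Qed.

Lemma expR_gap_natmul (x : R) (n m : nat) : 0 <= x -> (n <= 2 * m)%N ->
  n%:R * x <= (1 - expR (- x) ^+ m) * (2 + n%:R * x).
Proof.
move=> x_ge0 nm; have mx_ge0 : 0 <= m%:R * x by rewrite mulr_ge0.
have := expR_gap _ mx_ge0; rewrite -mulrN expRM_natl; set q := 1 - _ => gap.
have q_le1 : q <= 1 by rewrite /q lerBlDr lerDl exprn_ge0 // expR_ge0.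
have nm_R : n%:R <= 2 * m%:R :> R by rewrite -natrM ler_nat.
have := ler_wpM2r x_ge0 nm_R; nra.
Qed.

End ExpBounds.

Definition observability_const {R : realFieldType} (g h : R) (n : nat) : R :=
  44 / (g * (h * n%:R) ^+ 3) + (264 + 44 * g ^+ 2) / (g * h * n%:R).

Lemma observability_const_gt0 {R : realFieldType} (g h : R) n :
  0 < g -> 0 < h -> (0 < n)%N -> 0 < observability_const g h n.
Proof.
move=> g_gt0 h_gt0 n_gt0; have k_gt0 : 0 < n%:R :> R by rewrite ltr0n.
apply: addr_gt0; apply: divr_gt0; rewrite ?mulr_gt0 ?exprn_gt0 ?mulr_gt0 //.
by have := sqr_ge0 g; lra.
Qed.

Section Coordinate.
Variables (R : realType) (g h a : R) (u : nat -> R) (n : nat).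
Hypotheses (g_gt0 : 0 < g) (h_gt0 : 0 < h) (n_gt0 : (0 < n)%N).
Let x := g * h.
Let e := expR (- x).
Let eps := expR (- x / 2).
Hypothesis uS : forall j, u j.+1 = h * eps * a + e * u j.
Let V := orbit_energy e u n.

Let x_gt0 : 0 < x. Proof. exact: mulr_gt0. Qed.
Let e_gt0 : 0 < e. Proof. exact: expR_gt0. Qed.
Let e_lt1 : e < 1. Proof. by rewrite expR_lt1 oppr_lt0. Qed.
Let one_sub_e_ge0 : 0 <= 1 - e. Proof. by rewrite subr_ge0 ltW. Qed.
Let eps_sqr : eps ^+ 2 = e.
Proof. by rewrite -expRM_natr; congr expR; rewrite mulr_natr mulr2n -splitr. Qed.

Let xe_le : x * e <= 1 - e.
Proof.
have := expR_ge1Dx x; have : expR x * e = 1 by rewrite -expRD subrr expR0.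
have := ltW e_gt0; nra.
Qed.

Let one_sub_e_le : 1 - e <= x.
Proof. by have := expR_ge1Dx (- x); rewrite -/e; lra. Qed.

Let V_ge0 : 0 <= V.
Proof.
by apply: addr_ge0; [rewrite mulr_ge0 ?sqr_ge0 // ltW | apply: sumr_ge0 => i _; exact: sqr_ge0].
Qed.

Lemma coord_energy_le :
  V / e <= \sum_(0 <= j < n) ((h * a + eps * u j) ^+ 2 + u j ^+ 2).
Proof.
have step j : (h * a + eps * u j) ^+ 2 = u j.+1 ^+ 2 / e.
  by rewrite uS -[in RHS]eps_sqr; field; rewrite gt_eqF ?expR_gt0.
have split_V : V / e = u 0%N ^+ 2 + (\sum_(1 <= i < n.+1) u i ^+ 2) / e.
  by rewrite /V /orbit_energy; field; rewrite gt_eqF.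
have head : u 0%N ^+ 2 <= \sum_(0 <= j < n) u j ^+ 2.
  by rewrite (big_ltn n_gt0) lerDl; apply: sumr_ge0 => j _; exact: sqr_ge0.
rewrite split_V big_split /= addrC; apply: lerD => //.
rewrite [X in _ <= X](eq_bigr (fun j => u j.+1 ^+ 2 / e)) => [|j _]; last exact: step.
by rewrite -mulr_suml big_add1 lexx.
Qed.

Lemma last_coord_bound : u n ^+ 2 <= 66 / (x * n%:R) * ((1 - e) * (V / e)).
Proof.
have n_pos : 0 < n%:R :> R by rewrite ltr0n.
have := last_sqr_bound uS e_gt0 e_lt1 n_gt0; rewrite -/V => bound.
have -> : 66 / (x * n%:R) * ((1 - e) * (V / e)) = 66 * (1 - e) * V / (x * n%:R * e).
  by field; rewrite !gt_eqF.
rewrite ler_pdivlMr ?mulr_gt0 //.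
have := ler_wpM2l (mulr_ge0 (ltW x_gt0) (ltW e_gt0)) bound.
have := ler_wpM2r (mulr_ge0 (ler0n R 66) V_ge0) xe_le.
nra.
Qed.

Lemma first_coord_bound :
  a ^+ 2 <= (44 / (g * (h * n%:R) ^+ 3) + 44 * g / (h * n%:R)) * ((1 - e) * (V / e)).
Proof.
pose k : R := n%:R; set Z := (1 - e) * (V / e).
set m := (n - n %/ 2)%N; set N := (n %/ 2).+1; set q := 1 - e ^+ m.
have [m_gt0 [Nm n_le_2m]] : (0 < m)%N /\ (N + m = n.+1)%N /\ (n <= 2 * m)%N by lia.
have k_gt0 : 0 < k by rewrite ltr0n.
have kx_ge0 : 0 <= k * x by rewrite mulr_ge0 ?ltW.
have aq : k * (h ^+ 2 * a ^+ 2 * q ^+ 2) <= 8 * x * Z.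
  have drift := drift_bound uS e_gt0 e_lt1 N m isT m_gt0 Nm; rewrite -/q -/V in drift.
  have c_sq : (h * eps * a * q) ^+ 2 = e * (h ^+ 2 * a ^+ 2 * q ^+ 2).
    by rewrite !exprMn eps_sqr; ring.
  have nN : k <= 2 * N%:R by rewrite -natrM ler_nat; lia.
  have := ler_wpM2r (mulr_ge0 (ltW e_gt0) (sqr_ge0 (h * a * q))) nN.
  have := ler_wpM2r (mulr_ge0 one_sub_e_ge0 (mulr_ge0 (ler0n R 8) V_ge0)) one_sub_e_le.
  rewrite c_sq !exprMn in drift *; move=> s_le_x nN_e.
  rewrite -(ler_pM2l e_gt0).
  have -> : e * (8 * x * Z) = 8 * x * (1 - e) * V by rewrite /Z; field; rewrite gt_eqF.
  nra.
have gap_sq : (k * x) ^+ 2 <= q ^+ 2 * (2 + k * x) ^+ 2.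
  have gap : k * x <= q * (2 + k * x) by apply: expR_gap_natmul => //; exact: ltW.
  by rewrite -exprMn; apply: ler_pM.
have poly : 8 * (2 + k * x) ^+ 2 <= 44 * (1 + (k * x) ^+ 2).
  by have := sqr_ge0 (9 * (k * x) - 4); nra.
have -> : (44 / (g * (h * k) ^+ 3) + 44 * g / (h * k)) * Z
          = 44 * Z * (1 + (k * x) ^+ 2) / (h ^+ 2 * k ^+ 3 * x).
  by rewrite /x; field; rewrite !gt_eqF.
rewrite ler_pdivlMr ?mulr_gt0 ?exprn_gt0 // -(ler_pM2l x_gt0).
have Z_ge0 : 0 <= Z by rewrite /Z mulr_ge0 // divr_ge0 // ltW.
have := ler_wpM2l (mulr_ge0 (ltW k_gt0) (sqr_ge0 (h * a))) gap_sq.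
have := ler_wpM2r (sqr_ge0 (2 + k * x)) aq.
have := ler_wpM2l (mulr_ge0 (ltW x_gt0) Z_ge0) poly.
lra.
Qed.

Lemma coord_observability :
  a ^+ 2 + u n ^+ 2 <= observability_const g h n *
    ((1 - e) * \sum_(0 <= j < n) ((h * a + eps * u j) ^+ 2 + u j ^+ 2)).
Proof.
pose k : R := n%:R; set Z := (1 - e) * (V / e).
have k_gt0 : 0 < k by rewrite ltr0n.
have Z_ge0 : 0 <= Z by rewrite /Z mulr_ge0 // divr_ge0 // ltW.
have c1_ge0 : 0 <= 44 / (g * (h * k) ^+ 3) + 44 * g / (h * k).
  by rewrite addr_ge0 // divr_ge0 ?mulr_ge0 ?exprn_ge0 ?mulr_ge0 // ltW.
have c2_ge0 : 0 <= 66 / (x * k) by rewrite divr_ge0 // mulr_ge0 // ltW.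
(* The bound on u_n has constant 66; the 264 of the statement leaves slack 198. *)
have coef : 44 / (g * (h * k) ^+ 3) + 44 * g / (h * k) + 66 / (x * k)
            <= observability_const g h n.
  have -> : observability_const g h n
            = 44 / (g * (h * k) ^+ 3) + 44 * g / (h * k) + 66 / (x * k) + 198 / (x * k).
    by rewrite /observability_const /x; field; rewrite !gt_eqF.
  by rewrite lerDl divr_ge0 // mulr_ge0 // ltW.
have Z_le := ler_wpM2l one_sub_e_ge0 coord_energy_le; rewrite -/Z in Z_le.
have := ler_wpM2r Z_ge0 coef.
have := ler_wpM2l (le_trans (addr_ge0 c1_ge0 c2_ge0) coef) Z_le.
have := first_coord_bound; have := last_coord_bound; rewrite -/k -/Z.
lra.
Qed.

End Coordinate.

Section MatrixPowers.
Context {R : comUnitRingType} {m : nat}.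
Implicit Types M : 'M[R]_m.

Lemma trmxX M k : (M ^+ k)^T = M^T ^+ k.
Proof.
elim: k => [|k IH]; first by rewrite !expr0 trmx1.
by rewrite exprS exprSr -!mulmxE trmx_mul IH.
Qed.

Lemma unitmxX M k : M \in unitmx -> M ^+ k \in unitmx.
Proof.
move=> M_unit; elim: k => [|k IH]; first by rewrite expr0 unitmx1.
by rewrite exprS -mulmxE unitmx_mul M_unit.
Qed.

End MatrixPowers.

Section SquaredNorm.
Context {R : realType}.

Definition qform {m} (S : 'M[R]_m) (w : 'cV[R]_m) : R := (w^T *m S *m w) 0 0.

Lemma sqnormE {m} (v : 'cV[R]_m) : sqnorm v = (v^T *m v) 0 0.
Proof. by rewrite /sqnorm !mxE; apply: eq_bigr => i _; rewrite mxE expr2. Qed.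

Lemma sqnorm_ge0 {m} (v : 'cV[R]_m) : 0 <= sqnorm v.
Proof. by apply: sumr_ge0 => i _; exact: sqr_ge0. Qed.

Lemma sqnorm_le0 {m} (v : 'cV[R]_m) : sqnorm v <= 0 -> v = 0.
Proof.
move=> v_le0; have v_eq0 : sqnorm v = 0 by apply/eqP; rewrite eq_le v_le0 sqnorm_ge0.
apply/matrixP => i j; rewrite (ord1 j) mxE.
by apply/eqP; rewrite -sqrf_eq0; apply/eqP/(psumr_eq0P _ v_eq0) => // k _; exact: sqr_ge0.
Qed.

Lemma sqnorm_col_mx {m1 m2} (v1 : 'cV[R]_m1) (v2 : 'cV[R]_m2) :
  sqnorm (col_mx v1 v2) = sqnorm v1 + sqnorm v2.
Proof.
by rewrite /sqnorm big_split_ord /=; congr (_ + _); apply: eq_bigr => i _;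
  rewrite ?col_mxEu ?col_mxEd.
Qed.

Lemma sqnormZ {m} (s : R) (v : 'cV[R]_m) : sqnorm (s *: v) = s ^+ 2 * sqnorm v.
Proof. by rewrite /sqnorm mulr_sumr; apply: eq_bigr => i _; rewrite mxE exprMn. Qed.

Lemma qform_gram {I : Type} (r : seq I) {p m} (M : I -> 'M[R]_(p, m)) w :
  qform (\sum_(k <- r) (M k)^T *m M k) w = \sum_(k <- r) sqnorm (M k *m w).
Proof.
rewrite /qform mulmx_sumr mulmx_suml summxE; apply: eq_bigr => k _.
by rewrite sqnormE trmx_mul !mulmxA.
Qed.

Lemma gram_sym {I : Type} (r : seq I) {p m} (M : I -> 'M[R]_(p, m)) :
  (\sum_(k <- r) (M k)^T *m M k)^T = \sum_(k <- r) (M k)^T *m M k.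
Proof. by rewrite raddf_sum; apply: eq_bigr => k _; rewrite /= trmx_mul trmxK. Qed.

Lemma qform_sqr_sym {m} (T : 'M[R]_m) x : T^T = T -> qform (T *m T) x = sqnorm (T *m x).
Proof. by move=> T_sym; rewrite sqnormE /qform trmx_mul T_sym !mulmxA. Qed.

Lemma dot_le_sqnorm {m} (y v : 'cV[R]_m) (C : R) :
  2 * C * (v^T *m y) 0 0 <= sqnorm y + C ^+ 2 * sqnorm v.
Proof.
rewrite mxE /sqnorm !mulr_sumr -big_split; apply: ler_sum => i _.
by rewrite /= !mxE; have := sqr_ge0 (y i 0 - C * v i 0); lra.
Qed.

Lemma qform_invmx {m} (S : 'M[R]_m) x : S \in unitmx -> S^T = S ->
  qform S (invmx S *m x) = qform (invmx S) x.
Proof.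
move=> S_unit S_sym; set y := invmx S *m x.
have -> : x = S *m y by rewrite /y mulKVmx.
by clearbody y; rewrite /qform trmx_mul S_sym !mulmxA mulmxK.
Qed.

Section Domination.
Context {m : nat} {S B : 'M[R]_m} {C : R}.
Hypothesis dominated : forall w, sqnorm (B^T *m w) <= C * qform S w.

Lemma unitmx_dominated : B \in unitmx -> S \in unitmx.
Proof.
move=> B_unit; rewrite unitmxE unitfE; apply/negP => /det0P[v v_neq0 vS].
have := dominated v^T; rewrite /qform trmxK vS mul0mx mxE mulr0 => /sqnorm_le0 Bv.
have BT_unit : B^T \in unitmx by rewrite unitmx_tr.
by move: v_neq0; rewrite -[v]trmxK -(mulKmx BT_unit v^T) Bv mulmx0 trmx0 eqxx.
Qed.

Lemma qform_invmx_dominated v : S \in unitmx -> S^T = S -> 0 < C ->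
  qform (invmx S) (B *m v) <= C * sqnorm v.
Proof.
move=> S_unit S_sym C_gt0; set w := invmx S *m (B *m v).
have X_dot : qform (invmx S) (B *m v) = (v^T *m (B^T *m w)) 0 0.
  by rewrite /qform /w trmx_mul !mulmxA.
have := dot_le_sqnorm (B^T *m w) v C; have := dominated w.
rewrite qform_invmx // -X_dot => y_le dot_bound.
by rewrite -(ler_pM2l C_gt0); lra.
Qed.

End Domination.

End SquaredNorm.

Section LangevinMatrices.
Variables (R : realType) (d : nat) (g h : R).
Let e := expR (- (g * h)).
Let eps := expR (- (g * h) / 2).
Let A := Amx d g h.
Let L := Lmx d g h.

Lemma Amx_unit : A \in unitmx.
Proof.
rewrite unitmxE /A /Amx det_ublock det1 !det_scalar mul1r unitfE.
by rewrite expf_neq0 // gt_eqF // expR_gt0.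
Qed.

Lemma trAmx_col_mx (a b : 'cV[R]_d) :
  A^T *m col_mx a b = col_mx a ((h * eps) *: a + e *: b).
Proof.
rewrite /A /Amx tr_block_mx !tr_scalar_mx trmx0 mul_block_col.
by rewrite mul1mx mul0mx addr0 !mul_scalar_mx.
Qed.

Lemma usubmx_trAmxX (w : 'cV[R]_(d + d)) k : usubmx (A^T ^+ k *m w) = usubmx w.
Proof.
elim: k => [|k IH]; first by rewrite expr0 mul1mx.
by rewrite exprS -mulmxE -mulmxA -(vsubmxK (A^T ^+ k *m w)) trAmx_col_mx col_mxKu IH.
Qed.

Lemma dsubmx_trAmxS (w : 'cV[R]_(d + d)) k :
  dsubmx (A^T ^+ k.+1 *m w) = (h * eps) *: usubmx w + e *: dsubmx (A^T ^+ k *m w).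
Proof.
rewrite exprS -mulmxE -mulmxA -{1}(vsubmxK (A^T ^+ k *m w)) trAmx_col_mx col_mxKd.
by rewrite usubmx_trAmxX.
Qed.

Lemma sqnorm_trLmx (v : 'cV[R]_(d + d)) : 0 <= g * h ->
  sqnorm (L^T *m v) = (1 - e) *
    \sum_i ((h * usubmx v i 0 + eps * dsubmx v i 0) ^+ 2 + dsubmx v i 0 ^+ 2).
Proof.
move=> gh_ge0; rewrite -{1}(vsubmxK v) /L /Lmx linearZ /= -scalemxAl tr_block_mx.
rewrite !tr_scalar_mx trmx0 mul_block_col mul0mx mul1mx add0r !mul_scalar_mx.
rewrite sqnormZ sqr_sqrtr ?subr_ge0 ?expR_le1 ?oppr_le0 // sqnorm_col_mx.
by rewrite /sqnorm -big_split; congr (_ * _); apply: eq_bigr => i _; rewrite !mxE.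
Qed.

Lemma Sigmamx_gram n : Sigmamx d g h n =
  \sum_(1 <= k < n.+1) (L^T *m A^T ^+ (n - k))^T *m (L^T *m A^T ^+ (n - k)).
Proof. by apply: eq_bigr => k _; rewrite trmx_mul trmxK -trmxX trmxK !mulmxA. Qed.

Lemma trAmxX_dominated n (w : 'cV[R]_(d + d)) : 0 < g -> 0 < h -> (0 < n)%N ->
  sqnorm (A^T ^+ n *m w) <= observability_const g h n * qform (Sigmamx d g h n) w.
Proof.
move=> g_gt0 h_gt0 n_gt0; have gh_ge0 : 0 <= g * h by rewrite mulr_ge0 ?ltW.
set a := usubmx w; pose u j (i : 'I_d) := dsubmx (A^T ^+ j *m w) i 0.
rewrite Sigmamx_gram qform_gram.
have -> : \sum_(1 <= k < n.+1) sqnorm (L^T *m A^T ^+ (n - k) *m w)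
          = \sum_(0 <= j < n) sqnorm (L^T *m (A^T ^+ j *m w)).
  by rewrite big_add1 [RHS]big_nat_rev /=; apply: eq_bigr => j _; rewrite add0n mulmxA.
rewrite (eq_bigr (fun j => (1 - e) * \sum_i ((h * a i 0 + eps * u j i) ^+ 2 + u j i ^+ 2)));
  last by move=> j _; rewrite sqnorm_trLmx // usubmx_trAmxX.
rewrite -mulr_sumr exchange_big /= mulr_sumr mulr_sumr.
rewrite -(vsubmxK (A^T ^+ n *m w)) sqnorm_col_mx usubmx_trAmxX /sqnorm -big_split.
apply: ler_sum => i _.
by apply: coord_observability => // j; rewrite /u dsubmx_trAmxS !mxE.
Qed.

End LangevinMatrices.

Theorem mainTheorem8 (R : realType) (d : nat) (gamma h : R) (n : nat)
  (z zt : 'cV[R]_(d + d)) :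
  0 < gamma -> 0 < h -> (1 <= n)%N ->
  let dz := zt - z in
  (* first equality, with Sigma^{-1/2} the symmetric positive definite
     square root of Sigma^{-1} *)
  (forall S : 'M[R]_(d + d), spd S -> S *m S = invmx (Sigmamx d gamma h n) ->
     \sum_(1 <= k < n.+1) sqnorm (Evec d gamma h n k dz)
       = sqnorm (S *m (Amx d gamma h ^+ n) *m dz)) /\
  \sum_(1 <= k < n.+1) sqnorm (Evec d gamma h n k dz)
    <= (44 / (gamma * (h * n%:R) ^+ 3)
        + (264 + 44 * gamma ^+ 2) / (gamma * h * n%:R)) * sqnorm dz.
Proof.
move=> g_gt0 h_gt0 n_gt0 dz.
set Sigma := Sigmamx d gamma h n; set B := Amx d gamma h ^+ n.
have dominated w : sqnorm (B^T *m w) <= observability_const gamma h n * qform Sigma w.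
  by rewrite /B trmxX; exact: trAmxX_dominated.
have Sigma_unit : Sigma \in unitmx.
  by apply: (unitmx_dominated dominated); apply: unitmxX; exact: Amx_unit.
have Sigma_sym : Sigma^T = Sigma by rewrite /Sigma Sigmamx_gram gram_sym.
have E_sum : \sum_(1 <= k < n.+1) sqnorm (Evec d gamma h n k dz)
             = qform (invmx Sigma) (B *m dz).
  rewrite -qform_invmx // {1}/Sigma Sigmamx_gram qform_gram.
  by apply: eq_bigr => k _; rewrite /Evec !mulmxA.
split=> [S [S_sym _] S_sqr|].
  by rewrite E_sum -S_sqr qform_sqr_sym // mulmxA.
rewrite E_sum; apply: qform_invmx_dominated => //.
exact: observability_const_gt0.
Qed.
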